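(* Every Mayet-Godowski equation holds in every ortholattice that admits a strong set of states.
   Context: An ortholattice is a bounded lattice with an operation $'$ satisfying $a''=a$, $a\le b\Rightarrow b'\le a'$, $a\cap a'=0$ and $a\cup a'=1$. We write $a\perp b$ for $a\le b'$. A state on an ortholattice $L$ is a map $m:L\to[0,1]$ with $m(1)=1$ and $a\perp b\Rightarrow m(a\cup b)=m(a)+m(b)$. $L$ admits a strong set of states if there is a nonempty set $S$ of states such that for all $a,b\in L$ with $a\not\le b$ some $m\in S$ has $m(a)=1$ and $m(b)\ne1$. A Mayet-Godowski equation (MGE) is a conditional equality $$t_1\cap\cdots\cap t_n=u_1\cap\cdots\cap u_n,\qquad n\ge2,$$ where each $t_i=a_{i,1}\cup\cdots\cup a_{i,p_i}$ and each $u_i=b_{i,1}\cup\cdots\cup b_{i,q_i}$ is either a single variable or a join of two or more distinct variables. Two conditions are imposed: (1) as hypotheses, all variables occurring in the same term $t_i$ or $u_i$ are mutually orthogonal; (2) each variable occurs the same total number of times among the terms $t_1,\dots,t_n$ as among $u_1,\dots,u_n$. The MGE holds in $L$ if the equality is true for every assignment of elements of $L$ to the variables that satisfies all the orthogonality hypotheses in (1). *)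

From Stdlib Require Import Reals List Arith PeanoNat.
Import ListNotations.
Open Scope R_scope.

Record Ortholattice := {
  carrier :> Type;
  ole : carrier -> carrier -> Prop;
  ojoin : carrier -> carrier -> carrier;
  omeet : carrier -> carrier -> carrier;
  ocompl : carrier -> carrier;
  obot : carrier;
  otop : carrier;
  ole_refl : forall a, ole a a;
  ole_antisym : forall a b, ole a b -> ole b a -> a = b;
  ole_trans : forall a b c, ole a b -> ole b c -> ole a c;
  ojoin_ub_l : forall a b, ole a (ojoin a b);
  ojoin_ub_r : forall a b, ole b (ojoin a b);
  ojoin_lub : forall a b c, ole a c -> ole b c -> ole (ojoin a b) c;
  omeet_lb_l : forall a b, ole (omeet a b) a;
  omeet_lb_r : forall a b, ole (omeet a b) b;
  omeet_glb : forall a b c, ole c a -> ole c b -> ole c (omeet a b);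
  obot_least : forall a, ole obot a;
  otop_greatest : forall a, ole a otop;
  ocompl_invol : forall a, ocompl (ocompl a) = a;
  ocompl_antitone : forall a b, ole a b -> ole (ocompl b) (ocompl a);
  omeet_compl : forall a, omeet a (ocompl a) = obot;
  ojoin_compl : forall a, ojoin a (ocompl a) = otop
}.

Definition orth (L : Ortholattice) (a b : L) : Prop := ole L a (ocompl L b).

Definition is_state (L : Ortholattice) (m : L -> R) : Prop :=
  (forall a, 0 <= m a <= 1) /\
  m (otop L) = 1 /\
  (forall a b, orth L a b -> m (ojoin L a b) = m a + m b).

Definition admits_strong_set_of_states (L : Ortholattice) : Prop :=
  exists S : (L -> R) -> Prop,
    (exists m, S m) /\
    (forall m, S m -> is_state L m) /\
    (forall a b : L, ~ ole L a b ->
       exists m, S m /\ m a = 1 /\ m b <> 1).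

(* Mayet-Godowski equations.  Variables are natural numbers; a term is a
   list of variables (standing for their join); an MGE is given by the two
   lists of terms t_1..t_n and u_1..u_n. *)
Record MGE := { mge_lhs : list (list nat); mge_rhs : list (list nat) }.

Definition mge_wf (e : MGE) : Prop :=
  length (mge_lhs e) = length (mge_rhs e) /\
  (2 <= length (mge_lhs e))%nat /\
  (forall l, In l (mge_lhs e ++ mge_rhs e) -> l <> nil /\ NoDup l) /\
  (forall v : nat, count_occ Nat.eq_dec (concat (mge_lhs e)) v =
                   count_occ Nat.eq_dec (concat (mge_rhs e)) v).

Definition term_val (L : Ortholattice) (a : nat -> L) (l : list nat) : L :=
  fold_right (ojoin L) (obot L) (map a l).
Definition big_meet (L : Ortholattice) (xs : list L) : L :=
  fold_right (omeet L) (otop L) xs.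

Definition mge_holds (L : Ortholattice) (e : MGE) : Prop :=
  forall a : nat -> L,
    (forall l, In l (mge_lhs e ++ mge_rhs e) ->
       forall x y, In x l -> In y l -> x <> y -> orth L (a x) (a y)) ->
    big_meet L (map (term_val L a) (mge_lhs e)) =
    big_meet L (map (term_val L a) (mge_rhs e)).

From Stdlib Require Import Reals List Arith PeanoNat.
From Stdlib Require Import Lra Permutation Classical.
Open Scope R_scope.

(* Fix an assignment [a] satisfying the
   orthogonality hypotheses and a state [m].  Since the variables of a term
   are mutually orthogonal, [m] of a term is the sum of [m] over its
   variables; summing over all terms of a side gives the sum of [m] over all
   variable occurrences, which is the same for both sides because every
   variable occurs equally often on each side.  Since values lie in [0,1],
   if [m] is 1 on every [t_i], the common sum is n, which forces [m] to be 1
   on every [u_j] too.  In a lattice with a strong set of states [S],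
   [x <= y] holds as soon as every state of [S] equal to 1 on [x] is equal
   to 1 on [y]; applied to [x = t_1 /\ ... /\ t_n] and [y = u_j] this gives
   one inequality between the two meets, and the other follows by symmetry. *)

Definition sumR (l : list R) : R := fold_right Rplus 0 l.

Lemma sumR_app (l1 l2 : list R) : sumR (l1 ++ l2) = sumR l1 + sumR l2.
Proof. induction l1 as [|x l1 IH]; simpl; [lra | rewrite IH; lra]. Qed.

Lemma sumR_perm (l1 l2 : list R) : Permutation l1 l2 -> sumR l1 = sumR l2.
Proof. induction 1; simpl; lra. Qed.

Lemma sumR_all_one (l : list R) :
  (forall x, In x l -> x = 1) -> sumR l = INR (length l).
Proof.
  induction l as [|y l IH]; intros Hone; [reflexivity|].
  change (sumR (y :: l)) with (y + sumR l).
  change (length (y :: l)) with (S (length l)); rewrite S_INR.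
  rewrite (Hone y (or_introl eq_refl)), IH by (intros; apply Hone; simpl; auto).
  lra.
Qed.

Lemma sumR_le_length (l : list R) :
  (forall x, In x l -> x <= 1) -> sumR l <= INR (length l).
Proof.
  induction l as [|y l IH]; intros Hle; [simpl; lra|].
  change (sumR (y :: l)) with (y + sumR l).
  change (length (y :: l)) with (S (length l)); rewrite S_INR.
  assert (y <= 1) by (apply Hle; simpl; auto).
  assert (sumR l <= INR (length l)) by (apply IH; intros; apply Hle; simpl; auto).
  lra.
Qed.

Lemma sumR_length_all_one (l : list R) :
  (forall x, In x l -> x <= 1) -> sumR l = INR (length l) ->
  forall x, In x l -> x = 1.
Proof.
  induction l as [|y l IH]; intros Hle Hsum x Hx; [destruct Hx|].
  change (sumR (y :: l)) with (y + sumR l) in Hsum.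
  change (length (y :: l)) with (S (length l)) in Hsum; rewrite S_INR in Hsum.
  assert (Hy : y <= 1) by (apply Hle; simpl; auto).
  assert (Hl : forall z, In z l -> z <= 1) by (intros; apply Hle; simpl; auto).
  pose proof (sumR_le_length l Hl).
  destruct Hx as [<- | Hx]; [lra|].
  apply (IH Hl); [lra | exact Hx].
Qed.

Definition pairwise_orth (L : Ortholattice) (a : nat -> L) (l : list nat) : Prop :=
  forall x y, In x l -> In y l -> x <> y -> orth L (a x) (a y).

Lemma term_val_lub (L : Ortholattice) (a : nat -> L) (l : list nat) (c : L) :
  (forall y, In y l -> ole L (a y) c) -> ole L (term_val L a l) c.
Proof.
  induction l as [|x l IH]; intros Hle; simpl.
  - apply obot_least.
  - apply ojoin_lub; [apply Hle; simpl | apply IH; intros; apply Hle; simpl]; auto.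
Qed.

Lemma big_meet_lb (L : Ortholattice) (xs : list L) (x : L) :
  In x xs -> ole L (big_meet L xs) x.
Proof.
  induction xs as [|y xs IH]; simpl; [tauto|]. intros [<- | Hx].
  - apply omeet_lb_l.
  - eapply ole_trans; [apply omeet_lb_r | auto].
Qed.

Lemma big_meet_glb (L : Ortholattice) (xs : list L) (c : L) :
  (forall x, In x xs -> ole L c x) -> ole L c (big_meet L xs).
Proof.
  induction xs as [|y xs IH]; intros Hle; simpl.
  - apply otop_greatest.
  - apply omeet_glb; [apply Hle; simpl | apply IH; intros; apply Hle; simpl]; auto.
Qed.

Section States.
Variable L : Ortholattice.
Variable m : L -> R.
Hypothesis Hm : is_state L m.

Lemma state_le_1 (x : L) : m x <= 1.
Proof. destruct Hm as [H01 _]; apply H01. Qed.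

(* States are monotone: [m x + m y' = m (x \/ y') <= 1 = m y + m y']. *)
Lemma state_mono (x y : L) : ole L x y -> m x <= m y.
Proof.
  destruct Hm as [H01 [Htop Hadd]]. intro Hxy.
  assert (Hx : orth L x (ocompl L y)) by (unfold orth; rewrite ocompl_invol; exact Hxy).
  assert (Hy : orth L y (ocompl L y)) by (unfold orth; rewrite ocompl_invol; apply ole_refl).
  pose proof (Hadd _ _ Hx) as Ex. pose proof (Hadd _ _ Hy) as Ey.
  rewrite ojoin_compl, Htop in Ey.
  pose proof (H01 (ojoin L x (ocompl L y))). lra.
Qed.

Lemma state_bot : m (obot L) = 0.
Proof.
  destruct Hm as [_ [_ Hadd]].
  assert (Hbot : orth L (obot L) (obot L)) by apply obot_least.
  pose proof (Hadd _ _ Hbot) as E.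
  assert (Ejoin : ojoin L (obot L) (obot L) = obot L).
  { apply ole_antisym; [apply ojoin_lub; apply ole_refl | apply ojoin_ub_l]. }
  rewrite Ejoin in E. lra.
Qed.

Lemma state_term_val (a : nat -> L) (l : list nat) :
  NoDup l -> pairwise_orth L a l ->
  m (term_val L a l) = sumR (map (fun v => m (a v)) l).
Proof.
  induction l as [|x l IH]; intros Hnd Horth; simpl.
  - apply state_bot.
  - inversion Hnd as [|? ? Hx Hnd']; subst.
    destruct Hm as [_ [_ Hadd]].
    unfold term_val; simpl; rewrite Hadd.
    + fold (term_val L a l); rewrite IH; auto.
      intros y z Hy Hz; apply Horth; simpl; auto.
    + (* [a x] is orthogonal to every [a y], hence to their join. *)
      unfold orth. rewrite <- (ocompl_invol L (a x)). apply ocompl_antitone.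
      apply term_val_lub. intros y Hy. apply Horth; simpl; auto.
      intros ->; contradiction.
Qed.

Lemma state_terms_sum (a : nat -> L) (T : list (list nat)) :
  (forall l, In l T -> NoDup l /\ pairwise_orth L a l) ->
  sumR (map (fun l => m (term_val L a l)) T) =
  sumR (map (fun v => m (a v)) (concat T)).
Proof.
  induction T as [|l T IH]; intros HT; simpl; [reflexivity|].
  destruct (HT l (or_introl eq_refl)) as [Hnd Horth].
  rewrite map_app, sumR_app, state_term_val by assumption.
  rewrite IH by (intros; apply HT; simpl; auto).
  reflexivity.
Qed.

Lemma state_one_transfer (a : nat -> L) (T U : list (list nat)) :
  length T = length U ->
  Permutation (concat T) (concat U) ->
  (forall l, In l T -> NoDup l /\ pairwise_orth L a l) ->
  (forall l, In l U -> NoDup l /\ pairwise_orth L a l) ->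
  (forall t, In t T -> m (term_val L a t) = 1) ->
  forall u, In u U -> m (term_val L a u) = 1.
Proof.
  intros Hlen Hperm HT HU Hone u Hu.
  set (f := fun l => m (term_val L a l)).
  assert (Hsum : sumR (map f U) = INR (length (map f U))).
  { unfold f; rewrite state_terms_sum by exact HU.
    rewrite <- (sumR_perm _ _ (Permutation_map _ Hperm)), <- state_terms_sum by exact HT.
    rewrite sumR_all_one, !length_map, Hlen; [reflexivity|].
    intros x Hx; apply in_map_iff in Hx as [t [<- Ht]]; auto. }
  refine (sumR_length_all_one (map f U) _ Hsum (f u) (in_map f U u Hu)).
  intros x Hx; apply in_map_iff in Hx as [l [<- _]]; apply state_le_1.
Qed.

End States.

Lemma strong_states_le (L : Ortholattice) (S : (L -> R) -> Prop) :
  (forall x y : L, ~ ole L x y -> exists m, S m /\ m x = 1 /\ m y <> 1) ->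
  forall x y : L, (forall m, S m -> m x = 1 -> m y = 1) -> ole L x y.
Proof.
  intros Hstrong x y Hone. apply NNPP; intro Hnle.
  destruct (Hstrong x y Hnle) as [m [Sm [Hx Hy]]].
  exact (Hy (Hone m Sm Hx)).
Qed.

Lemma mge_meet_le (L : Ortholattice) (a : nat -> L) (T U : list (list nat)) :
  admits_strong_set_of_states L ->
  length T = length U ->
  Permutation (concat T) (concat U) ->
  (forall l, In l T -> NoDup l /\ pairwise_orth L a l) ->
  (forall l, In l U -> NoDup l /\ pairwise_orth L a l) ->
  ole L (big_meet L (map (term_val L a) T)) (big_meet L (map (term_val L a) U)).
Proof.
  intros [S [_ [Hstate Hstrong]]] Hlen Hperm HT HU.
  apply big_meet_glb; intros y Hy.
  apply in_map_iff in Hy as [u [<- Hu]].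
  apply (strong_states_le L S Hstrong); intros m Sm Hmeet.
  pose proof (Hstate m Sm) as Hm.
  apply (state_one_transfer L m Hm a T U); auto.
  (* [m] is 1 on the meet of the [t_i], hence on each [t_i] by monotonicity. *)
  intros t Ht.
  pose proof (state_mono L m Hm _ _ (big_meet_lb L _ (term_val L a t) (in_map _ _ _ Ht))).
  pose proof (state_le_1 L m Hm (term_val L a t)). lra.
Qed.

Theorem theorem6p4 :
  forall (L : Ortholattice), admits_strong_set_of_states L ->
  forall (e : MGE), mge_wf e -> mge_holds L e.
Proof.
  intros L HL [T U] [Hlen [_ [Hnd Hcount]]] a Horth; simpl in *.
  assert (Hperm : Permutation (concat T) (concat U))
    by (apply (Permutation_count_occ Nat.eq_dec); exact Hcount).
  assert (Hsides : forall l, In l (T ++ U) -> NoDup l /\ pairwise_orth L a l)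
    by (intros l Hl; split; [apply Hnd, Hl | exact (Horth l Hl)]).
  assert (HT : forall l, In l T -> NoDup l /\ pairwise_orth L a l)
    by (intros; apply Hsides, in_or_app; auto).
  assert (HU : forall l, In l U -> NoDup l /\ pairwise_orth L a l)
    by (intros; apply Hsides, in_or_app; auto).
  apply ole_antisym; apply mge_meet_le; auto.
  apply Permutation_sym; exact Hperm.
Qed.
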